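(* $$\max_{U_1,U_2\in\mathcal R}\ \langle 2|U_2\,\mathcal M_2(U_1|1\rangle\langle 1|U_1^\dagger)\,U_2^\dagger|2\rangle=\frac12 .$$
   Context: Basis of $\mathbb C^3$: $|1\rangle,|2\rangle,|3\rangle$ (standard basis). Spin-1 matrices in this basis: $J_y=\frac{1}{\sqrt2}\begin{pmatrix}0&-i&0\\ i&0&-i\\ 0&i&0\end{pmatrix}$, $J_z=\mathrm{diag}(1,0,-1)$. Define $Z(\alpha,\beta,\gamma)=e^{-i\alpha J_z}e^{-i\beta J_y}e^{-i\gamma J_z}$. Let $\mathcal R=\{Z(\alpha,\beta,\gamma):\alpha,\beta,\gamma\in\mathbb R\}\subset U(3)$. For $j\in\{1,2\}$ let $P_j=|j\rangle\langle j|$ and $\mathcal M_j(\rho)=P_j\rho P_j+(\mathbb I-P_j)\rho(\mathbb I-P_j)$ (non-selective measurement of the population of $|j\rangle$). *)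

From HB Require Import structures.
From mathcomp Require Import all_boot all_order all_algebra.
From mathcomp Require Import all_classical all_reals all_analysis.
From mathcomp Require Import complex.
Set Implicit Arguments. Unset Strict Implicit. Unset Printing Implicit Defensive.
Import Order.TTheory GRing.Theory Num.Theory numFieldNormedType.Exports.
Local Open Scope ring_scope.
Local Open Scope complex_scope.

Section Defs.
Variable R : realType.
Local Notation C := R[i].

Definition expm_partial (A : 'M[C]_3) (n : nat) : 'M[C]_3 :=
  \sum_(k < n) ((k`!)%:R)^-1 *: A ^+ k.

Definition expm (A : 'M[C]_3) : 'M[C]_3 :=
  \matrix_(i < 3, j < 3)
    Complex (limn (fun n => complex.Re (expm_partial A n i j)))
            (limn (fun n => complex.Im (expm_partial A n i j))).

(* Spin-1 matrices in the standard basis |1>,|2>,|3> (indices 0,1,2). *)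
Definition Jy : 'M[C]_3 :=
  ((Num.sqrt 2)^-1)%:C *:
  \matrix_(i < 3, j < 3)
    (if (i == 0 :> nat) && (j == 1 :> nat) then - 'i
     else if (i == 1 :> nat) && (j == 0 :> nat) then 'i
     else if (i == 1 :> nat) && (j == 2 :> nat) then - 'i
     else if (i == 2 :> nat) && (j == 1 :> nat) then 'i
     else 0).

Definition Jz : 'M[C]_3 :=
  \matrix_(i < 3, j < 3)
    (if (i == j) then (if i == 0 :> nat then 1 else if i == 1 :> nat then 0 else -1)
     else 0).

Definition Zrot (a b c : R) : 'M[C]_3 :=
  expm ((- ('i * a%:C)) *: Jz) *m expm ((- ('i * b%:C)) *: Jy)
    *m expm ((- ('i * c%:C)) *: Jz).

Definition in_rot (U : 'M[C]_3) : Prop := exists a b c : R, U = Zrot a b c.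

Definition adj (U : 'M[C]_3) : 'M[C]_3 := map_mx (@conjc R) (trmx U).

(* P_j = |j><j|  (j : 'I_3, i.e. |j+1> in the paper's labelling). *)
Definition proj (j : 'I_3) : 'M[C]_3 := delta_mx j j.

(* Non-selective measurement of the population of |j>. *)
Definition meas (j : 'I_3) (rho : 'M[C]_3) : 'M[C]_3 :=
  proj j *m rho *m proj j + (1 - proj j) *m rho *m (1 - proj j).

Definition idx1 : 'I_3 := @Ordinal 3 0 isT.
Definition idx2 : 'I_3 := @Ordinal 3 1 isT.

Definition fidelity_val (U1 U2 : 'M[C]_3) : C :=
  (U2 *m meas idx2 (U1 *m proj idx1 *m adj U1) *m adj U2) idx2 idx2.

End Defs.

(* Jz and Jy satisfy J^3 = J, so the exponential series of -itJ splits into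
   the cosine and sine series: e^{-itJ} = 1 + (cos t - 1) J^2 - i sin t J.
   Hence Z(a,b,c) = D(a) d(b) D(c) with D(a) a diagonal matrix of unimodular
   phases and d(b) the Wigner matrix of J_y.  After the measurement of |2>,
   the population of |2> is |U1_21|^2 |U2_22|^2 + |U2_21 U1_11 + U2_23 U1_31|^2,
   which for U1 = Z(a,b,c), U2 = Z(a',b',c') and t = c' + a equals
     (sin^2 b cos^2 b' + sin^2 b' (cos^2 b cos^2 t + sin^2 t)) / 2.
   This is at most 1/2, with equality for b = pi/2, b' = 0. *)

From Pilot Require Import Defs.
From HB Require Import structures.
From mathcomp Require Import all_boot all_order all_algebra.
From mathcomp Require Import all_classical all_reals all_analysis.
From mathcomp Require Import complex.
From mathcomp Require Import ring lra.

Set Implicit Arguments.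
Unset Strict Implicit.
Unset Printing Implicit Defensive.

Import Order.TTheory GRing.Theory Num.Theory numFieldNormedType.Exports.
Local Open Scope ring_scope.
Local Open Scope complex_scope.

Local Notation Re := complex.Re.
Local Notation Im := complex.Im.

Section ComplexParts.
Variable R : realType.
Implicit Types (x y : R) (z w : R[i]).

Lemma ReD z w : Re (z + w) = Re z + Re w. Proof. by case: z; case: w. Qed.
Lemma ImD z w : Im (z + w) = Im z + Im w. Proof. by case: z; case: w. Qed.
Lemma ReN z : Re (- z) = - Re z. Proof. by case: z. Qed.
Lemma ImN z : Im (- z) = - Im z. Proof. by case: z. Qed.
Lemma ReM z w : Re (z * w) = Re z * Re w - Im z * Im w.
Proof. by case: z; case: w. Qed.
Lemma ImM z w : Im (z * w) = Re z * Im w + Im z * Re w.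
Proof. by case: z => a b; case: w => c d /=; ring. Qed.
Lemma ReJ z : Re z^* = Re z. Proof. by case: z. Qed.
Lemma ImJ z : Im z^* = - Im z. Proof. by case: z. Qed.
Lemma ReC x : Re x%:C = x. Proof. by []. Qed.
Lemma ImC x : Im x%:C = 0. Proof. by []. Qed.
Lemma Re_Complex x y : Re (x +i* y) = x. Proof. by []. Qed.
Lemma Im_Complex x y : Im (x +i* y) = y. Proof. by []. Qed.
Lemma Re1 : Re (1 : R[i]) = 1. Proof. by []. Qed.
Lemma Im1 : Im (1 : R[i]) = 0. Proof. by []. Qed.
Lemma Re0 : Re (0 : R[i]) = 0. Proof. by []. Qed.
Lemma Im0 : Im (0 : R[i]) = 0. Proof. by []. Qed.
Lemma Rei : Re ('i : R[i]) = 0. Proof. by []. Qed.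
Lemma Imi : Im ('i : R[i]) = 1. Proof. by []. Qed.
Lemma Re_mulil z : Re ('i * z) = - Im z. Proof. by case: z => a b /=; ring. Qed.
Lemma Im_mulil z : Im ('i * z) = Re z. Proof. by case: z => a b /=; ring. Qed.

Lemma complex_eqP z w : Re z = Re w -> Im z = Im w -> z = w.
Proof. by case: z; case: w => /= ? ? ? ? -> ->. Qed.

End ComplexParts.

(* [Rei] and [Imi] must fire first: the later rules would expose the raw zero
   inside ['i], which [ring] does not recognize as 0. *)
Definition ReImE := (Rei, Imi, Re_mulil, Im_mulil, ReD, ImD, ReN, ImN, ReM, ImM,
  ReJ, ImJ, ReC, ImC, Re1, Im1, Re0, Im0, Re_Complex, Im_Complex).

Ltac complex_ring := apply: complex_eqP; rewrite !ReImE; ring.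
Ltac complex_field := apply: complex_eqP; rewrite !ReImE; field.

Lemma real_complexD (R : realType) (x y : R) : (x + y)%:C = x%:C + y%:C :> R[i].
Proof. complex_ring. Qed.

Lemma real_complexM (R : realType) (x y : R) : (x * y)%:C = x%:C * y%:C :> R[i].
Proof. complex_ring. Qed.

Section Sqrt2.
Variable R : rcfType.

Lemma sqrt2_neq0 : Num.sqrt 2 != 0 :> R.
Proof. by rewrite gt_eqF // sqrtr_gt0. Qed.

Lemma sqr_div_sqrt2 (x : R) : (x / Num.sqrt 2) ^+ 2 = x ^+ 2 / 2.
Proof. by rewrite exprMn exprVn sqr_sqrtr. Qed.

End Sqrt2.

Definition idx3 : 'I_3 := @Ordinal 3 2 isT.

Lemma ord3P (i : 'I_3) : [\/ i = idx1, i = idx2 | i = idx3].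
Proof.
by case: i => [[|[|[|//]]] ?]; [constructor 1 | constructor 2 | constructor 3];
  apply: val_inj.
Qed.

Lemma sum3 (V : nmodType) (F : 'I_3 -> V) : \sum_(k < 3) F k = F idx1 + F idx2 + F idx3.
Proof.
by rewrite !big_ord_recl big_ord0 addr0 addrA; congr (F _ + F _ + F _); apply: val_inj.
Qed.

Lemma mulmx3E (R : pzSemiRingType) m n (M1 : 'M[R]_(m, 3)) (M2 : 'M[R]_(3, n)) i j :
  (M1 *m M2) i j = M1 i idx1 * M2 idx1 j + M1 i idx2 * M2 idx2 j + M1 i idx3 * M2 idx3 j.
Proof. by rewrite mxE sum3. Qed.

Lemma mx_cube (R : pzRingType) n (J : 'M[R]_n.+1) : J ^+ 3 = J *m J *m J.
Proof. by rewrite !exprS expr0 mulr1 !mulmxE mulrA. Qed.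

Lemma exprS_cube_idem (R : pzRingType) (x : R) k :
  x ^+ 3 = x -> x ^+ k.+1 = if odd k then x ^+ 2 else x.
Proof.
move=> x3; elim: k => [|k IHk]; first by rewrite expr1.
by rewrite exprSr IHk /=; case: (odd k); [rewrite -exprSr | rewrite expr2].
Qed.

Section Rodrigues.
Variable R : realType.
Local Notation C := R[i].
Local Open Scope classical_set_scope.
Implicit Types (t : R) (J : 'M[C]_3).

Lemma cvg_series_cos t : series (cos_coeff t) @ \oo --> cos t.
Proof. by rewrite cos.unlock; exact: is_cvg_series_cos_coeff. Qed.

Lemma cvg_series_sin t : series (sin_coeff t) @ \oo --> sin t.
Proof. by rewrite sin.unlock; exact: is_cvg_series_sin_coeff. Qed.

Lemma cvg_series_cos_sin t x y z :
  (fun n => x + (series (cos_coeff t) n - 1) * y + series (sin_coeff t) n * z)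
    @ \oo --> x + (cos t - 1) * y + sin t * z.
Proof.
apply: cvgD; last by apply: cvgM; [exact: cvg_series_sin | exact: cvg_cst].
apply: cvgD; first exact: cvg_cst.
by apply: cvgM; [apply: cvgB; [exact: cvg_series_cos | exact: cvg_cst] | exact: cvg_cst].
Qed.

Lemma limn_eq_shiftS (f g : R ^nat) l :
  (forall n, f n.+1 = g n.+1) -> g @ \oo --> l -> limn f = l.
Proof.
move=> fg gl; apply: cvg_lim => //; rewrite -cvg_shiftS.
by rewrite (_ : [sequence f n.+1]_n = [sequence g n.+1]_n) ?cvg_shiftS //; apply/funext.
Qed.

Lemma series_recl (u : R ^nat) n : series u n.+1 = u 0%N + \sum_(k < n) u k.+1.
Proof. by rewrite /series /= big_nat_recl // big_mkord. Qed.

Lemma exp_coeffE t n : ((n`!)%:R : C)^-1 * (- ('i * t%:C)) ^+ n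
  = (cos_coeff t n)%:C - 'i * (sin_coeff t n)%:C.
Proof.
have -> : ((n`!)%:R : C)^-1 = ((n`!)%:R^-1)%:C by rewrite fmorphV rmorph_nat.
rewrite -mulNr exprMn mulrCA -rmorphXn -rmorphM.
have signE k : (-1 : C) ^+ k = ((-1) ^+ k)%:C by rewrite rmorphXn rmorphN1.
have [m [-> | ->]] : exists m, n = m.*2 \/ n = m.*2.+1.
  exists n./2; have := odd_double_half n.
  by case: (odd n); rewrite /= ?add0n ?add1n => ->; [right | left].
- rewrite /cos_coeff /sin_coeff /= odd_double /= doubleK -exprnP.
  rewrite -mul2n exprM sqrrN sqr_i signE.
  complex_ring.
- rewrite /cos_coeff /sin_coeff /= odd_double /= doubleK.
  rewrite exprS -mul2n exprM sqrrN sqr_i signE.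
  complex_ring.
Qed.

Lemma exp_term_cube_idem J t k : J ^+ 3 = J ->
  ((k.+1)`!%:R)^-1 *: ((- ('i * t%:C)) *: J) ^+ k.+1 =
  (cos_coeff t k.+1)%:C *: J ^+ 2 - ('i * (sin_coeff t k.+1)%:C) *: J.
Proof.
move=> J3; rewrite exprZn scalerA exp_coeffE scalerBl /cos_coeff /sin_coeff /=.
have := exprS_cube_idem k J3; case: (odd k) => /= ->;
  by rewrite !(mul0r, rmorph0, mulr0, scale0r, subr0, sub0r).
Qed.

Lemma expm_partial_cube_idem J t n : J ^+ 3 = J ->
  expm_partial ((- ('i * t%:C)) *: J) n.+1 =
  1 + (series (cos_coeff t) n.+1 - 1)%:C *: J ^+ 2
    - ('i * (series (sin_coeff t) n.+1)%:C) *: J.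
Proof.
move=> J3; rewrite /expm_partial big_ord_recl /= expr0 invr1 scale1r.
under eq_bigr => k _ do rewrite exp_term_cube_idem //.
rewrite big_split /= sumrN -scaler_suml -scaler_suml -mulr_sumr -!rmorph_sum.
have cos_coeff0 : cos_coeff t 0 = 1 by rewrite /cos_coeff /= expr0z !mul1r invr1.
have sin_coeff0 : sin_coeff t 0 = 0 by rewrite /sin_coeff /= !mul0r.
by rewrite !series_recl cos_coeff0 sin_coeff0 add0r (addrAC (1 : R)) subrr add0r addrA.
Qed.

Lemma expm_cube_idem J t : J ^+ 3 = J ->
  expm ((- ('i * t%:C)) *: J) = 1 + (cos t - 1)%:C *: J ^+ 2 - ('i * (sin t)%:C) *: J.
Proof.
move=> J3; apply/matrixP => i j; rewrite mxE; apply: complex_eqP => /=.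
- rewrite (limn_eq_shiftS _ (@cvg_series_cos_sin t (Re (1%:M i j))
    (Re ((J ^+ 2) i j)) (Im (J i j)))).
  + by rewrite !mxE !ReImE; ring.
  + by move=> n; rewrite expm_partial_cube_idem // !mxE !ReImE; ring.
- rewrite (limn_eq_shiftS _ (@cvg_series_cos_sin t (Im (1%:M i j))
    (Im ((J ^+ 2) i j)) (- Re (J i j)))).
  + by rewrite !mxE !ReImE; ring.
  + by move=> n; rewrite expm_partial_cube_idem // !mxE !ReImE; ring.
Qed.

End Rodrigues.

Section SpinRotations.
Variable R : realType.
Local Notation C := R[i].
Implicit Types (a b c : R).

Lemma Jz_cube : Jz R ^+ 3 = Jz R.
Proof.
rewrite mx_cube; apply/matrixP => i j.
by case: (ord3P i) => ->; case: (ord3P j) => ->; rewrite !(mulmx3E, mxE) /=; ring.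
Qed.

Lemma Jy_cube : Jy R ^+ 3 = Jy R.
Proof.
rewrite /Jy; set M := \matrix_(i < 3, j < 3) _.
have M3 : M ^+ 3 = M *+ 2.
  rewrite mx_cube; apply/matrixP => i j.
  by case: (ord3P i) => ->; case: (ord3P j) => ->; rewrite !(mulmx3E, mxE) /=; complex_ring.
rewrite exprZn M3 -scalerMnr scalerMnl; congr (_ *: M).
rewrite -rmorphXn -(rmorphMn (real_complex R)); congr (_%:C).
by rewrite exprS exprVn sqr_sqrtr // -mulr_natr -mulrA mulVf ?pnatr_eq0 ?mulr1.
Qed.

(* [Jz_phase a j] is e^{-i a m} for the eigenvalue m = 1, 0, -1 of Jz on |j>. *)
Definition Jz_phase a (j : 'I_3) : C :=
  if j == idx1 then cos a -i* sin a else if j == idx2 then 1 else cos a +i* sin a.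

Lemma expm_Jz a : expm ((- ('i * a%:C)) *: Jz R) = diag_mx (\row_j Jz_phase a j).
Proof.
rewrite expm_cube_idem ?Jz_cube // expr2 -mulmxE; apply/matrixP => i j.
by case: (ord3P i) => ->; case: (ord3P j) => ->; rewrite !(mulmx3E, mxE) /=; complex_ring.
Qed.

Definition wigner_d b : 'M[C]_3 := expm ((- ('i * b%:C)) *: Jy R).

Lemma Zrot_entry a b c j k :
  Zrot a b c j k = Jz_phase a j * wigner_d b j k * Jz_phase c k.
Proof. by rewrite /Zrot !expm_Jz mul_mx_diag mxE mul_diag_mx !mxE. Qed.

Ltac wigner_entry :=
  rewrite /wigner_d expm_cube_idem ?Jy_cube // {1}/Jy exprZn -rmorphXn exprVn sqr_sqrtr //;
  rewrite expr2 -mulmxE !(mulmx3E, mxE) /=;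
  complex_field; exact: sqrt2_neq0.

Lemma wigner_d11 b : wigner_d b idx1 idx1 = ((1 + cos b) / 2)%:C.
Proof. wigner_entry. Qed.

Lemma wigner_d21 b : wigner_d b idx2 idx1 = (sin b / Num.sqrt 2)%:C.
Proof. wigner_entry. Qed.

Lemma wigner_d31 b : wigner_d b idx3 idx1 = ((1 - cos b) / 2)%:C.
Proof. wigner_entry. Qed.

Lemma wigner_d22 b : wigner_d b idx2 idx2 = (cos b)%:C.
Proof. wigner_entry. Qed.

Lemma wigner_d23 b : wigner_d b idx2 idx3 = (- sin b / Num.sqrt 2)%:C.
Proof. wigner_entry. Qed.

End SpinRotations.

Section Fidelity.
Variable R : realType.
Local Notation C := R[i].
Implicit Types (a b c : R) (U rho : 'M[C]_3).

Definition normsq (z : C) : R := Re z ^+ 2 + Im z ^+ 2.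

Lemma mulcJ_normsq (z : C) : z * z^* = (normsq z)%:C.
Proof. by rewrite /normsq; complex_ring. Qed.

Lemma normsqM (z w : C) : normsq (z * w) = normsq z * normsq w.
Proof. by rewrite /normsq !ReImE; ring. Qed.

Lemma normsq_real (x : R) : normsq x%:C = x ^+ 2.
Proof. by rewrite /normsq ReC ImC expr0n addr0. Qed.

Lemma normsq_Complex (x y : R) : normsq (x +i* y) = x ^+ 2 + y ^+ 2.
Proof. by []. Qed.

Lemma normsq_Jz_phase a j : normsq (Jz_phase a j) = 1.
Proof.
rewrite /normsq /Jz_phase; case: (ord3P j) => -> /=;
  by rewrite ?sqrrN ?cos2Dsin2 // expr1n expr0n addr0.
Qed.

Lemma rank_one_entry U j k :
  (U *m Defs.proj R idx1 *m Defs.adj U) j k = U j idx1 * (U k idx1)^*.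
Proof. by rewrite /Defs.proj /Defs.adj !(mulmx3E, mxE) /=; ring. Qed.

Lemma meas2_entry rho j k :
  meas idx2 rho j k = if (j == idx2) == (k == idx2) then rho j k else 0.
Proof.
by case: (ord3P j) => ->; case: (ord3P k) => ->;
  rewrite /meas /Defs.proj !(mulmx3E, mxE) /=; ring.
Qed.

Lemma fidelity_valE U1 U2 :
  fidelity_val U1 U2 = (normsq (U1 idx2 idx1) * normsq (U2 idx2 idx2)
    + normsq (U2 idx2 idx1 * U1 idx1 idx1 + U2 idx2 idx3 * U1 idx3 idx1))%:C.
Proof.
rewrite real_complexD real_complexM -!mulcJ_normsq !(rmorphD conjc, rmorphM conjc).
rewrite /fidelity_val !mulmx3E !meas2_entry /= !rank_one_entry /Defs.adj !mxE.
ring.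
Qed.

Lemma fidelity_Zrot a b c a' b' c' :
  fidelity_val (Zrot a b c) (Zrot a' b' c') =
  (sin b ^+ 2 / 2 * cos b' ^+ 2
   + sin b' ^+ 2 / 2 * ((cos b * cos (c' + a)) ^+ 2 + sin (c' + a) ^+ 2))%:C.
Proof.
rewrite fidelity_valE.
(* The matrices are generalized first: matching an entry of one of them
   against an entry of another would otherwise unfold [expm]. *)
move: (Zrot_entry a b c) (Zrot_entry a' b' c').
move: (wigner_d21 b) (wigner_d11 b) (wigner_d31 b).
move: (wigner_d21 b') (wigner_d22 b') (wigner_d23 b').
move: (Zrot a b c) (Zrot a' b' c') (wigner_d b) (wigner_d b') => U1 U2 W1 W2.
move=> W2_21 W2_22 W2_23 W1_21 W1_11 W1_31 U1E U2E.
rewrite !U1E !U2E W2_21 W2_22 W2_23 W1_21 W1_11 W1_31.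
rewrite !normsqM !normsq_Jz_phase !mul1r !mulr1.
rewrite [X in _ + normsq X](_ : _ = Jz_phase c idx1 *
    ((sin b' / Num.sqrt 2)%:C * (cos b * cos (c' + a) -i* sin (c' + a)))); last first.
  by rewrite /Jz_phase /= cosD sinD; complex_field; exact: sqrt2_neq0.
rewrite !normsqM normsq_Jz_phase mul1r !normsq_real normsq_Complex.
by rewrite !sqr_div_sqrt2 sqrrN; congr (_%:C); ring.
Qed.

End Fidelity.

Lemma sqr_mix_le1 (R : realFieldType) (c s c' s' u v : R) :
  c ^+ 2 + s ^+ 2 = 1 -> c' ^+ 2 + s' ^+ 2 = 1 -> u ^+ 2 + v ^+ 2 = 1 ->
  s ^+ 2 * c' ^+ 2 + s' ^+ 2 * ((c * u) ^+ 2 + v ^+ 2) <= 1.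
Proof.
move=> cs cs' uv.
have cuv_le1 : (c * u) ^+ 2 + v ^+ 2 <= 1 by rewrite exprMn; nra.
have : s ^+ 2 * c' ^+ 2 <= c' ^+ 2 by nra.
nra.
Qed.

Theorem theorem3 (R : realType) :
  (exists U1 U2 : 'M[R[i]]_3,
      in_rot U1 /\ in_rot U2 /\ fidelity_val U1 U2 = (2%:R)^-1) /\
  (forall U1 U2 : 'M[R[i]]_3,
      in_rot U1 -> in_rot U2 -> fidelity_val U1 U2 <= (2%:R)^-1).
Proof.
have half : (2%:R)^-1 = (2^-1 : R)%:C by rewrite fmorphV rmorph_nat.
split.
- exists (Zrot 0 (pi / 2) 0), (Zrot 0 0 0).
  split; first by exists 0, (pi / 2), 0.
  split; first by exists 0, 0, 0.
  rewrite fidelity_Zrot half sin_pihalf cos_pihalf cos0 sin0; congr (_%:C); ring.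
- move=> _ _ [a [b [c ->]]] [a' [b' [c' ->]]].
  rewrite fidelity_Zrot half lecR.
  have := sqr_mix_le1 (cos2Dsin2 b) (cos2Dsin2 b') (cos2Dsin2 (c' + a)).
  lra.
Qed.
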